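(* Let $f\in F$ be strongly positive and let $w=x_{i_m}\cdots x_{i_1}$ ($i_k\ge1$) be any expression for $f$ as a product of $x_1,x_2,\dots$. Consider rewriting $w$ by repeatedly applying operations that replace a subword $x_kx_n$ with $k<n-1$ by $x_{n-1}x_k$ (which is valid in $F$). Then any sequence of such operations has at most $\binom{c(f)}{2}$ steps, and when no operation is applicable the resulting word is the anti-normal form of $f$, i.e. the unique expression $x_{j_m}\cdots x_{j_1}$ of $f$ with $j_{k+1}\ge j_k-1$ for all $k$.
   Context: Thompson's group $F=\langle x_0,x_1,x_2,\dots\mid x_nx_k=x_kx_{n+1}\text{ for }k<n\rangle$. An element is strongly positive if it lies in the submonoid generated by $x_1,x_2,\dots$. Every strongly positive $f$ has a unique expression $x_{j_m}\cdots x_{j_1}$ ($j_k\ge1$) with $j_{k+1}\ge j_k-1$ for all $k$ (its anti-normal form). $c(f)$ denotes the number of letters in any expression of $f$ as a product of $x_1,x_2,\dots$ (this number is independent of the expression since all relations are length-preserving; it equals the number of carets in the reduced forest diagram of $f$). *)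

From mathcomp Require Import all_boot.
Set Implicit Arguments. Unset Strict Implicit. Unset Printing Implicit Defensive.

(* A word x_{i_m} ... x_{i_1} in the generators x_1, x_2, ... of Thompson's
   group F is represented by the list [:: i_m; ...; i_1] of its indices,
   read left to right exactly as written. *)
Definition word := seq nat.

Definition sp_word (w : word) : Prop := all (fun i => 0 < i) w.

Definition F_rel (u v : word) : Prop :=
  exists (a b : word) (k n : nat),
    k < n /\ u = a ++ [:: n; k] ++ b /\ v = a ++ [:: k; n.+1] ++ b.

Inductive F_eq : word -> word -> Prop :=
| F_eq_refl u : F_eq u u
| F_eq_rel u v : F_rel u v -> F_eq u v
| F_eq_sym u v : F_eq u v -> F_eq v u
| F_eq_trans u v w : F_eq u v -> F_eq v w -> F_eq u w.

Definition rw_step (u v : word) : Prop :=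
  exists (a b : word) (k n : nat),
    k < n - 1 /\ u = a ++ [:: k; n] ++ b /\ v = a ++ [:: n - 1; k] ++ b.

Inductive rw_steps : word -> word -> nat -> Prop :=
| rw_nil u : rw_steps u u 0
| rw_cons u v w t : rw_step u v -> rw_steps v w t -> rw_steps u w t.+1.

Definition rw_terminal (u : word) : Prop := ~ exists v, rw_step u v.

(* Anti-normal form condition: for u = x_{j_m} ... x_{j_1} (list [:: j_m; ...; j_1]),
   all j_k >= 1 and j_{k+1} >= j_k - 1 for all k.  In the list, j_{k+1} is at
   position i and j_k at position i+1. *)
Definition anti_normal (u : word) : Prop :=
  sp_word u /\
  forall i, i.+1 < size u -> nth 0 u i.+1 - 1 <= nth 0 u i.

(* c(f) for f represented by w: number of letters of any positive expression *)
Definition c_of (w : word) : nat := size w.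

(* The bound comes from an induction on the word, peeling off its last letter
   x_y.  The condition that x_y never has to move past the letters b behind it
   (tail_bounded) is preserved by all rewrites, so along any rewriting sequence
   x_y only travels leftwards, one letter of the prefix a at a time, and every
   other step is a step of a rewriting sequence of the word a ++ b.  Hence the
   number of steps grows by at most size a when x_y is appended, and summing
   gives 0 + 1 + ... + (m - 1) = 'C(m, 2).  A word to which no rewrite applies
   satisfies the anti-normal form condition pointwise, and every rewrite is an
   instance of a defining relation of F read backwards. *)

From mathcomp Require Import all_boot zify.

Set Implicit Arguments.
Unset Strict Implicit.
Unset Printing Implicit Defensive.

Lemma cat_pair_eq_cat_cons (T : Type) (A B a b : seq T) (k n y : T) :
  A ++ k :: n :: B = a ++ y :: b ->
  [\/ exists C, a = A ++ k :: n :: C /\ B = C ++ y :: b,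
      [/\ a = rcons A k, n = y & B = b],
      [/\ A = a, k = y & b = n :: B]
    | exists C, A = a ++ y :: C /\ b = C ++ k :: n :: B].
Proof.
elim: A a => [|z A IH] [|x a] /=.
- by case=> -> ->; apply: Or43.
- case=> -> E; case: a E => [|x' a] /= [-> ->]; first exact: Or42.
  by apply: Or41; exists a.
- by case=> -> <-; apply: Or44; exists A.
- case=> -> /IH [[C [-> ->]]|[-> -> ->]|[-> -> ->]|[C [-> ->]]].
  + by apply: Or41; exists C.
  + exact: Or42.
  + exact: Or43.
  + by apply: Or44; exists C.
Qed.

Definition steps_bounded (u : word) (n : nat) : Prop :=
  forall v t, rw_steps u v t -> t <= n.

Lemma steps_bounded_step u v n :
  steps_bounded u n -> rw_step u v -> 0 < n /\ steps_bounded v n.-1.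
Proof.
move=> Hu Huv; split; first exact: Hu _ _ (rw_cons Huv (rw_nil v)).
by move=> r t Hvr; have := Hu _ _ (rw_cons Huv Hvr); lia.
Qed.

Lemma steps_bounded_nil : steps_bounded [::] 0.
Proof.
move=> v [|t] // H; inversion H as [|u v' w t' [a [b [k [n [_ [E _]]]]]]].
by move/(congr1 size): E; rewrite size_cat /= addnS.
Qed.

(* A letter x_y followed by the letters b can never be rewritten together with
   them: this needs y < b_0 - 1, excluded at position 0, and the shifted bounds
   y + g.+1 at the later positions g survive the rewrites inside b. *)
Fixpoint tail_bounded (y : nat) (b : word) : bool :=
  if b is x :: b' then (x <= y.+1) && tail_bounded y.+1 b' else true.

Lemma tail_bounded_cat y b1 b2 :
  tail_bounded y (b1 ++ b2) = tail_bounded y b1 && tail_bounded (y + size b1) b2.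
Proof.
elim: b1 y => [|x b1 IH] y /=; first by rewrite addn0.
by rewrite IH addSnnS andbA.
Qed.

Lemma tail_bounded_step y b b' : rw_step b b' -> tail_bounded y b -> tail_bounded y b'.
Proof.
case=> [B1 [B2 [k [n [Hkn [-> ->]]]]]].
rewrite !tail_bounded_cat /= => /and3P [-> /and3P [Hk Hn _] ->].
by rewrite andbT /=; apply/andP; split; lia.
Qed.

Lemma steps_bounded_insert n a y b :
  tail_bounded y b -> steps_bounded (a ++ b) n -> steps_bounded (a ++ y :: b) (n + size a).
Proof.
move=> Hyb Hn v t; move E: (a ++ y :: b) => u Huv.
elim: Huv n a y b E Hyb Hn => [|{}u {}v w {}t Hstep _ IH] n a y b //.
case: Hstep IH => A [B [k [m [Hkm [-> ->]]]]] IH /esym E Hyb Hn.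
case: (cat_pair_eq_cat_cons E) => [[C [Ea EB]]|[Ea Em EB]|[EA Ek Eb]|[C [EA Eb]]];
  subst; clear E.
- have Hstep : rw_step ((A ++ [:: k, m & C]) ++ b) ((A ++ [:: m - 1, k & C]) ++ b).
    by exists A, (C ++ b), k, m; rewrite -!catA.
  have [Hn0 Hn1] := steps_bounded_step Hn Hstep.
  have := IH n.-1 (A ++ [:: m - 1, k & C]) y b _ Hyb Hn1.
  by rewrite !size_cat /= -!catA => /(_ erefl); lia.
- (* x_k x_y becomes x_{y-1} x_k: x_{y-1} passes one letter of the prefix *)
  have Hyb' : tail_bounded (y - 1) (k :: b).
    by rewrite /= (_ : (y - 1).+1 = y) ?Hyb ?andbT; [apply/leP; lia | lia].
  have := IH n A (y - 1) (k :: b) erefl Hyb'.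
  by rewrite -cat_rcons size_rcons => /(_ Hn); lia.
- by move: Hyb => /= /andP [Hmy _]; lia.
- have Hstep : rw_step (a ++ C ++ [:: k, m & B]) (a ++ C ++ [:: m - 1, k & B]).
    by exists (a ++ C), B, k, m; rewrite -!catA.
  have [Hn0 Hn1] := steps_bounded_step Hn Hstep.
  have Hyb' : tail_bounded y (C ++ [:: m - 1, k & B]).
    by apply: tail_bounded_step Hyb; exists C, B, k, m.
  have := IH n.-1 a y (C ++ [:: m - 1, k & B]) _ Hyb' Hn1.
  by rewrite -!catA => /(_ erefl); lia.
Qed.

Lemma steps_bounded_binomial (s : word) : steps_bounded s 'C(size s, 2).
Proof.
elim/last_ind: s => [|s y IH]; first exact: steps_bounded_nil.
rewrite -cats1 size_cat addn1 binS bin1.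
by apply: steps_bounded_insert; rewrite // cats0.
Qed.

Lemma rw_step_sp_word u v : rw_step u v -> sp_word u -> sp_word v.
Proof.
case=> [A [B [k [n [Hkn [-> ->]]]]]].
rewrite /sp_word !all_cat /= => /and3P [-> /and3P [Hk _ _] ->].
by rewrite Hk !andbT; apply/ltP; lia.
Qed.

Lemma rw_step_F_eq u v : rw_step u v -> F_eq u v.
Proof.
case=> [A [B [k [n [Hkn [-> ->]]]]]].
have Hn : (n - 1).+1 = n by lia.
by apply/F_eq_sym/F_eq_rel; exists A, B, k, (n - 1); rewrite Hn; split => //; lia.
Qed.

Lemma rw_steps_sp_word u v t : rw_steps u v t -> sp_word u -> sp_word v.
Proof. by elim=> // {}u {}v w {}t /rw_step_sp_word Huv _ IH /Huv. Qed.

Lemma rw_steps_F_eq u v t : rw_steps u v t -> F_eq u v.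
Proof.
elim=> [{}u|{}u {}v w {}t /rw_step_F_eq Huv _ IH]; first exact: F_eq_refl.
exact: F_eq_trans Huv IH.
Qed.

Lemma rw_terminal_anti_normal u : sp_word u -> rw_terminal u -> anti_normal u.
Proof.
move=> Hsp Hterm; split => // i Hi; rewrite leqNgt; apply/negP => Hlt; apply: Hterm.
exists (take i u ++ [:: nth 0 u i.+1 - 1; nth 0 u i] ++ drop i.+2 u).
exists (take i u), (drop i.+2 u), (nth 0 u i), (nth 0 u i.+1); split; first by lia.
by rewrite /= -(drop_nth 0 Hi) -(drop_nth 0 (ltnW Hi)) cat_take_drop.
Qed.

Theorem theorem4p1p10 (w : word) :
  sp_word w ->
  (forall (w' : word) (t : nat), rw_steps w w' t -> t <= 'C(c_of w, 2)) /\
  (forall (w' : word) (t : nat), rw_steps w w' t -> rw_terminal w' ->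
      anti_normal w' /\ F_eq w w').
Proof.
move=> Hw; split; first exact: steps_bounded_binomial.
move=> w' t Hww' Hterm; split; last exact: rw_steps_F_eq Hww'.
exact: rw_terminal_anti_normal (rw_steps_sp_word Hww' Hw) Hterm.
Qed.
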